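(* Let $u$ be a smooth absolute $E_1$-minimizer on a domain of the $xy$-plane where $D\neq0$. Then $$\alpha\Big(N+\tfrac13\alpha^{-1}HN^{\perp}\Big)\theta+N^{\perp}(\alpha)=-\alpha^2 .$$
   Context: Heisenberg group $H_1$ with contact form $\Theta=dt+x\,dy-y\,dx$; graph $t=u(x,y)$, $D=[(u_x-y)^2+(u_y+x)^2]^{1/2}$, $\cos\theta=(u_x-y)/D$, $\sin\theta=(u_y+x)/D$, $\alpha=-1/D$, $H=D^{-3}\{(u_y+x)^2u_{xx}-2(u_y+x)(u_x-y)u_{xy}+(u_x-y)^2u_{yy}\}$ (the $p$-mean curvature), $N^{\perp}=\sin\theta\,\partial_x-\cos\theta\,\partial_y$, $N=\cos\theta\,\partial_x+\sin\theta\,\partial_y$. Absolute $E_1$-minimizer: $-N^{\perp}\alpha+\frac12\alpha^2+\frac16H^2=0$ on the nonsingular domain (this is $e_1\alpha+\frac12\alpha^2+\frac16H^2=0$, $e_1$ acting as $-N^\perp$). *)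

From Stdlib Require Import Reals.
From Coquelicot Require Import Coquelicot.
Open Scope R_scope.

Definition dx (f : R -> R -> R) : R -> R -> R :=
  fun x y => Derive (fun t => f t y) x.
Definition dy (f : R -> R -> R) : R -> R -> R :=
  fun x y => Derive (fun t => f x t) y.

Definition open_dom (Om : R -> R -> Prop) : Prop :=
  open (fun z : R * R => Om (fst z) (snd z)).

Fixpoint Ck (k : nat) (Om : R -> R -> Prop) (f : R -> R -> R) : Prop :=
  match k with
  | O => forall x y, Om x y ->
           continuous (fun z : R * R => f (fst z) (snd z)) (x, y)
  | S k' =>
      (forall x y, Om x y ->
         continuous (fun z : R * R => f (fst z) (snd z)) (x, y)
         /\ ex_derive (fun t => f t y) x /\ ex_derive (fun t => f x t) y)
      /\ Ck k' Om (dx f) /\ Ck k' Om (dy f)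
  end.

Definition smooth_on (Om : R -> R -> Prop) (f : R -> R -> R) : Prop :=
  forall k, Ck k Om f.

(* Quantities attached to the graph t = u(x,y) in H_1. *)
Definition Dfun (u : R -> R -> R) : R -> R -> R :=
  fun x y => sqrt ((dx u x y - y) ^ 2 + (dy u x y + x) ^ 2).
Definition cos_th (u : R -> R -> R) : R -> R -> R :=
  fun x y => (dx u x y - y) / Dfun u x y.
Definition sin_th (u : R -> R -> R) : R -> R -> R :=
  fun x y => (dy u x y + x) / Dfun u x y.
Definition alpha (u : R -> R -> R) : R -> R -> R :=
  fun x y => - / Dfun u x y.
Definition Hcurv (u : R -> R -> R) : R -> R -> R :=
  fun x y =>
    / (Dfun u x y ^ 3) *
    ((dy u x y + x) ^ 2 * dx (dx u) x y
     - 2 * (dy u x y + x) * (dx u x y - y) * dx (dy u) x y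
     + (dx u x y - y) ^ 2 * dy (dy u) x y).

Definition Nop (u : R -> R -> R) (f : R -> R -> R) : R -> R -> R :=
  fun x y => cos_th u x y * dx f x y + sin_th u x y * dy f x y.
Definition Nperp (u : R -> R -> R) (f : R -> R -> R) : R -> R -> R :=
  fun x y => sin_th u x y * dx f x y - cos_th u x y * dy f x y.

Definition abs_E1_minimizer (Om : R -> R -> Prop) (u : R -> R -> R) : Prop :=
  forall x y, Om x y ->
    - Nperp u (alpha u) x y + / 2 * alpha u x y ^ 2
      + / 6 * Hcurv u x y ^ 2 = 0.

From Stdlib Require Import Reals Lra.
From Coquelicot Require Import Coquelicot.
Open Scope R_scope.

(* Put (a, b) = (u_x - y, u_y + x): then D = |(a, b)|, alpha = -1/D and theta is
   the polar angle of (a, b).  Differentiating these, N^perp theta = -H and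
   N^perp alpha = alpha N theta + 2 alpha^2.  Eliminating N theta between the
   second identity and the minimizer equation N^perp alpha = alpha^2/2 + H^2/6
   reduces the left-hand side to -alpha^2. *)

Lemma is_derive_norm2 (A B : R -> R) (t0 dA dB : R) :
  is_derive A t0 dA -> is_derive B t0 dB -> 0 < A t0 ^ 2 + B t0 ^ 2 ->
  is_derive (fun t => sqrt (A t ^ 2 + B t ^ 2)) t0
    ((A t0 * dA + B t0 * dB) / sqrt (A t0 ^ 2 + B t0 ^ 2)).
Proof.
  intros HA HB Hpos.
  pose proof (sqrt_lt_R0 _ Hpos) as Hsqrt.
  auto_derive.
  - repeat split; try (eexists; eassumption). lra.
  - rewrite (is_derive_unique (fun t : R => A t) _ _ HA),
            (is_derive_unique (fun t : R => B t) _ _ HB).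
    replace (A t0 * (A t0 * 1) + B t0 * (B t0 * 1)) with (A t0 ^ 2 + B t0 ^ 2) by ring.
    field; lra.
Qed.

Lemma is_derive_neg_inv (S : R -> R) (t0 dS : R) :
  is_derive S t0 dS -> S t0 <> 0 -> is_derive (fun t => - / S t) t0 (dS / S t0 ^ 2).
Proof.
  intros HS HS0.
  pose proof (is_derive_opp _ _ _ (is_derive_inv _ _ _ HS HS0)) as Hd.
  replace (dS / S t0 ^ 2) with (- (- dS / S t0 ^ 2)) by (field; exact HS0).
  exact Hd.
Qed.

Lemma is_derive_polar_angle (g A B S : R -> R) (t0 dg dA dB dS : R) :
  is_derive g t0 dg -> is_derive A t0 dA -> is_derive B t0 dB -> is_derive S t0 dS ->
  S t0 <> 0 ->
  locally t0 (fun t => cos (g t) = A t / S t /\ sin (g t) = B t / S t) ->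
  dg = (A t0 * dB - B t0 * dA) / (S t0 * S t0).
Proof.
  intros Hg HA HB HS HS0 Hloc.
  destruct (locally_singleton _ _ Hloc) as [Hcos Hsin].
  assert (dcos : is_derive (fun t => A t / S t) t0 (dg * - sin (g t0))).
  { apply (is_derive_ext_loc (fun t => cos (g t))).
    - apply (filter_imp _ _ (fun t H => proj1 H) Hloc).
    - exact (is_derive_comp _ _ _ _ _ (is_derive_cos (g t0)) Hg). }
  assert (dsin : is_derive (fun t => B t / S t) t0 (dg * cos (g t0))).
  { apply (is_derive_ext_loc (fun t => sin (g t))).
    - apply (filter_imp _ _ (fun t H => proj2 H) Hloc).
    - exact (is_derive_comp _ _ _ _ _ (is_derive_sin (g t0)) Hg). }
  assert (qA : dg * - sin (g t0) = (dA * S t0 - A t0 * dS) / S t0 ^ 2).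
  { rewrite <- (is_derive_unique _ _ _ dcos).
    apply is_derive_unique, is_derive_div; assumption. }
  assert (qB : dg * cos (g t0) = (dB * S t0 - B t0 * dS) / S t0 ^ 2).
  { rewrite <- (is_derive_unique _ _ _ dsin).
    apply is_derive_unique, is_derive_div; assumption. }
  assert (Hpyth : cos (g t0) ^ 2 + sin (g t0) ^ 2 = 1)
    by (rewrite <- (sin2_cos2 (g t0)); unfold Rsqr; ring).
  (* dg = cos (dg cos) - sin (dg (- sin)); expanded by the quotient rule,
     the terms containing dS cancel *)
  transitivity (cos (g t0) * (dg * cos (g t0)) - sin (g t0) * (dg * - sin (g t0))).
  { transitivity (dg * (cos (g t0) ^ 2 + sin (g t0) ^ 2)); [rewrite Hpyth | idtac]; ring. }
  rewrite qA, qB, Hcos, Hsin.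
  field; exact HS0.
Qed.

Definition hgrad_x (u : R -> R -> R) : R -> R -> R := fun x y => dx u x y - y.
Definition hgrad_y (u : R -> R -> R) : R -> R -> R := fun x y => dy u x y + x.

Lemma Dfun_pow2 (u : R -> R -> R) (x y : R) :
  Dfun u x y ^ 2 = hgrad_x u x y ^ 2 + hgrad_y u x y ^ 2.
Proof. apply pow2_sqrt, Rplus_le_le_0_compat; apply pow2_ge_0. Qed.

Lemma hgrad_norm2_pos (u : R -> R -> R) (x y : R) :
  Dfun u x y <> 0 -> 0 < hgrad_x u x y ^ 2 + hgrad_y u x y ^ 2.
Proof.
  intros HD; rewrite <- Dfun_pow2.
  apply pow2_gt_0; exact HD.
Qed.

Lemma open_dom_locally_2d (Om : R -> R -> Prop) (x y : R) :
  open_dom Om -> Om x y -> locally_2d Om x y.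
Proof. intros Hop Hxy; apply locally_2d_locally, (Hop (x, y)), Hxy. Qed.

Section Graph.

Variables (Om : R -> R -> Prop) (u : R -> R -> R).
Hypothesis Om_open : open_dom Om.
Hypothesis u_C2 : Ck 2 Om u.

Lemma dxy_comm (x y : R) : Om x y -> dy (dx u) x y = dx (dy u) x y.
Proof.
  intros Hxy.
  destruct u_C2 as [Hu [[Hux [_ Huxy]] [Huy [Huyx _]]]].
  symmetry; apply Schwarz.
  - apply (locally_2d_impl Om); [apply locally_2d_forall | now apply open_dom_locally_2d].
    intros s t Hst.
    destruct (Hu s t Hst) as [_ [? ?]], (Hux s t Hst) as [_ [_ ?]], (Huy s t Hst) as [_ [? _]].
    repeat split; assumption.
  - apply continuity_2d_pt_filterlim, (Huyx x y Hxy).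
  - apply continuity_2d_pt_filterlim, (Huxy x y Hxy).
Qed.

Lemma is_derive_hgrad_dx (x y : R) : Om x y ->
  is_derive (fun t => hgrad_x u t y) x (dx (dx u) x y) /\
  is_derive (fun t => hgrad_y u t y) x (dx (dy u) x y + 1).
Proof.
  intros Hxy.
  destruct u_C2 as [_ [[Hux _] [Huy _]]].
  destruct (Hux x y Hxy) as [_ [Huxx _]], (Huy x y Hxy) as [_ [Huyx _]].
  unfold hgrad_x, hgrad_y; split; auto_derive; auto; unfold dx; ring.
Qed.

Lemma is_derive_hgrad_dy (x y : R) : Om x y ->
  is_derive (fun t => hgrad_x u x t) y (dx (dy u) x y - 1) /\
  is_derive (fun t => hgrad_y u x t) y (dy (dy u) x y).
Proof.
  intros Hxy.
  destruct u_C2 as [_ [[Hux _] [Huy _]]].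
  destruct (Hux x y Hxy) as [_ [_ Huxy]], (Huy x y Hxy) as [_ [_ Huyy]].
  rewrite <- dxy_comm by exact Hxy.
  unfold hgrad_x, hgrad_y; split; auto_derive; auto; unfold dy; ring.
Qed.

Hypothesis D_neq0 : forall x y, Om x y -> Dfun u x y <> 0.

Lemma partials_alpha (x y : R) : Om x y ->
  dx (alpha u) x y = (hgrad_x u x y * dx (dx u) x y
                      + hgrad_y u x y * (dx (dy u) x y + 1)) / Dfun u x y / Dfun u x y ^ 2 /\
  dy (alpha u) x y = (hgrad_x u x y * (dx (dy u) x y - 1)
                      + hgrad_y u x y * dy (dy u) x y) / Dfun u x y / Dfun u x y ^ 2.
Proof.
  intros Hxy.
  destruct (is_derive_hgrad_dx x y Hxy) as [Hax Hbx].
  destruct (is_derive_hgrad_dy x y Hxy) as [Hay Hby].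
  pose proof (hgrad_norm2_pos u x y (D_neq0 x y Hxy)) as Hpos.
  split; apply is_derive_unique.
  - apply (is_derive_neg_inv (fun t => Dfun u t y)); [| exact (D_neq0 x y Hxy)].
    exact (is_derive_norm2 (fun t => hgrad_x u t y) (fun t => hgrad_y u t y) x _ _ Hax Hbx Hpos).
  - apply (is_derive_neg_inv (fun t => Dfun u x t)); [| exact (D_neq0 x y Hxy)].
    exact (is_derive_norm2 (fun t => hgrad_x u x t) (fun t => hgrad_y u x t) y _ _ Hay Hby Hpos).
Qed.

Section Angle.

Variable theta : R -> R -> R.
Hypothesis theta_C1 : Ck 1 Om theta.
Hypothesis theta_polar : forall x y, Om x y ->
  cos (theta x y) = cos_th u x y /\ sin (theta x y) = sin_th u x y.

Lemma partials_theta (x y : R) : Om x y ->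
  dx theta x y = (hgrad_x u x y * (dx (dy u) x y + 1)
                  - hgrad_y u x y * dx (dx u) x y) / (Dfun u x y * Dfun u x y) /\
  dy theta x y = (hgrad_x u x y * dy (dy u) x y
                  - hgrad_y u x y * (dx (dy u) x y - 1)) / (Dfun u x y * Dfun u x y).
Proof.
  intros Hxy.
  destruct (is_derive_hgrad_dx x y Hxy) as [Hax Hbx].
  destruct (is_derive_hgrad_dy x y Hxy) as [Hay Hby].
  pose proof (hgrad_norm2_pos u x y (D_neq0 x y Hxy)) as Hpos.
  destruct theta_C1 as [Htheta _], (Htheta x y Hxy) as [_ [Htx Hty]].
  pose proof (open_dom_locally_2d Om x y Om_open Hxy) as Hloc.
  split.
  - apply (is_derive_polar_angle (fun t => theta t y) (fun t => hgrad_x u t y)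
             (fun t => hgrad_y u t y) (fun t => Dfun u t y) x _ _ _ _
             (Derive_correct _ _ Htx) Hax Hbx (is_derive_norm2 _ _ x _ _ Hax Hbx Hpos)
             (D_neq0 x y Hxy)).
    apply (filter_imp (fun t => Om t y)); [intros t; apply theta_polar |].
    apply locally_2d_1d_const_y, Hloc.
  - apply (is_derive_polar_angle (fun t => theta x t) (fun t => hgrad_x u x t)
             (fun t => hgrad_y u x t) (fun t => Dfun u x t) y _ _ _ _
             (Derive_correct _ _ Hty) Hay Hby (is_derive_norm2 _ _ y _ _ Hay Hby Hpos)
             (D_neq0 x y Hxy)).
    apply (filter_imp (fun t => Om x t)); [intros t; apply theta_polar |].
    apply locally_2d_1d_const_x, Hloc.
Qed.

Lemma Nperp_theta (x y : R) : Om x y -> Nperp u theta x y = - Hcurv u x y.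
Proof.
  intros Hxy.
  destruct (partials_theta x y Hxy) as [Htx Hty].
  pose proof (D_neq0 x y Hxy) as HD.
  unfold Nperp, Hcurv, cos_th, sin_th; rewrite Htx, Hty; fold (hgrad_x u x y) (hgrad_y u x y).
  field; exact HD.
Qed.

(* The extra term 2 alpha^2 is the Heisenberg twist: d_y (u_x - y) - d_x (u_y + x) = -2. *)
Lemma Nperp_alpha (x y : R) : Om x y ->
  Nperp u (alpha u) x y = alpha u x y * Nop u theta x y + 2 * alpha u x y ^ 2.
Proof.
  intros Hxy.
  destruct (partials_theta x y Hxy) as [Htx Hty].
  destruct (partials_alpha x y Hxy) as [Hax Hay].
  pose proof (D_neq0 x y Hxy) as HD.
  pose proof (Dfun_pow2 u x y) as HD2.
  unfold Nperp, Nop, cos_th, sin_th; rewrite Htx, Hty, Hax, Hay.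
  unfold alpha; fold (hgrad_x u x y) (hgrad_y u x y).
  replace (2 * (- / Dfun u x y) ^ 2)
    with (2 * (hgrad_x u x y ^ 2 + hgrad_y u x y ^ 2) / Dfun u x y ^ 4)
    by (rewrite <- HD2; field; exact HD).
  field; exact HD.
Qed.

End Angle.

End Graph.

Theorem proposition3p1 (Om : R -> R -> Prop) (u theta : R -> R -> R) :
  open_dom Om ->
  smooth_on Om u ->
  (forall x y, Om x y -> Dfun u x y <> 0) ->
  abs_E1_minimizer Om u ->
  Ck 1 Om theta ->
  (forall x y, Om x y ->
     cos (theta x y) = cos_th u x y /\ sin (theta x y) = sin_th u x y) ->
  forall x y, Om x y ->
    alpha u x y * (Nop u theta x y
                   + / 3 * / alpha u x y * Hcurv u x y * Nperp u theta x y)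
    + Nperp u (alpha u) x y
    = - (alpha u x y ^ 2).
Proof.
  intros Hopen Hsmooth HD Hmin Htheta Hpolar x y Hxy.
  rewrite (Nperp_theta Om u Hopen (Hsmooth 2%nat) HD theta Htheta Hpolar x y Hxy).
  pose proof (Nperp_alpha Om u Hopen (Hsmooth 2%nat) HD theta Htheta Hpolar x y Hxy)
    as Hperp_alpha.
  pose proof (Hmin x y Hxy) as Hminimizer.
  assert (Halpha : alpha u x y <> 0)
    by (apply Ropp_neq_0_compat, Rinv_neq_0_compat, HD, Hxy).
  replace (alpha u x y * (Nop u theta x y + / 3 * / alpha u x y * Hcurv u x y * - Hcurv u x y))
    with (alpha u x y * Nop u theta x y - Hcurv u x y ^ 2 / 3) by (field; exact Halpha).
  lra.
Qed.
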